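(* For every sufficiently large natural number $n$ and every natural number $\alpha$, there exists a set $B \subseteq \{0,1\}^n$ with $|B| \leq (2n^{13} + n^{12})\cdot 2^{\alpha}$ such that every string $y \in \{0,1\}^n$ is $\alpha$-dependent with some string $x \in B$.
   Context: $C(x)$ denotes the plain Kolmogorov complexity of the binary string $x$ with respect to a fixed universal Turing machine; $C(x \mid y)$ denotes the conditional plain Kolmogorov complexity of $x$ given $y$ with respect to a fixed universal conditional machine. A string $y$ is said to have $\alpha$-dependency with (be $\alpha$-dependent with) a string $x$ if $C(y) - C(y \mid x) \geq \alpha$ or $x = y$. *)

From Stdlib Require Import Cantor ClassicalEpsilon.
From mathcomp Require Import all_boot.
Set Implicit Arguments. Unset Strict Implicit. Unset Printing Implicit Defensive.

(* A model of computation: unary partial mu-recursive functions on nat,      *)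

Definition npair (a b : nat) : nat := Cantor.to_nat (a, b).
Definition nfst (x : nat) : nat := (Cantor.of_nat x).1.
Definition nsnd (x : nat) : nat := (Cantor.of_nat x).2.

Inductive code : Type :=
  | CZero
  | CSucc
  | CFst
  | CSnd
  | CPair of code & code
  | CComp of code & code
  | CRec of code & code   (* <a,0> |-> f a ; <a,m+1> |-> g <a,<m, rec <a,m>>> *)
  | CMu of code.          (* x |-> least i with f <x,i> = 0 (all earlier defined) *)

(* Fuel-bounded evaluation; [Some v] is only returned for the true value. *)
Fixpoint eval (k : nat) (c : code) (x : nat) : option nat :=
  match k with
  | 0 => None
  | k'.+1 =>
    match c with
    | CZero => Some 0
    | CSucc => Some x.+1
    | CFst => Some (nfst x)
    | CSnd => Some (nsnd x)
    | CPair f g =>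
        match eval k' f x, eval k' g x with
        | Some a, Some b => Some (npair a b)
        | _, _ => None
        end
    | CComp f g =>
        match eval k' g x with
        | Some a => eval k' f a
        | None => None
        end
    | CRec f g =>
        let a := nfst x in
        (fix r (n : nat) : option nat :=
           match n with
           | 0 => eval k' f a
           | m.+1 => match r m with
                     | Some v => eval k' g (npair a (npair m v))
                     | None => None
                     end
           end) (nsnd x)
    | CMu f =>
        (fix s (j i : nat) : option nat :=
           match j with
           | 0 => None
           | j'.+1 => match eval k' f (npair x i) with
                      | Some 0 => Some i
                      | Some _ => s j' i.+1
                      | None => None
                      end
           end) k' 0
    end
  end.

Definition halts_with (c : code) (x v : nat) : Prop := exists k, eval k c x = Some v.

(* Bijection {0,1}^* -> nat : s |-> (binary number "1s") - 1 *)
Definition nat_of_bits (s : seq bool) : nat :=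
  (foldl (fun acc (b : bool) => acc.*2 + b) 1 s).-1.

Definition outputs (U : code) (p x : seq bool) : Prop :=
  halts_with U (nat_of_bits p) (nat_of_bits x).

Definition coutputs (V : code) (p y x : seq bool) : Prop :=
  halts_with V (npair (nat_of_bits p) (nat_of_bits y)) (nat_of_bits x).

(* Additively optimal ("universal") machines, themselves computable codes. *)
Definition universal_plain (U : code) : Prop :=
  forall c : code, exists k : nat, forall p x : seq bool,
    outputs c p x -> exists2 q, outputs U q x & size q <= size p + k.

Definition universal_cond (V : code) : Prop :=
  forall c : code, exists k : nat, forall p y x : seq bool,
    coutputs c p y x -> exists2 q, coutputs V q y x & size q <= size p + k.

Definition min_length (P : seq bool -> Prop) : nat :=
  epsilon (inhabits 0)
    (fun n => (exists p, size p = n /\ P p) /\ forall p, P p -> n <= size p).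

Definition KC (U : code) (x : seq bool) : nat := min_length (fun p => outputs U p x).
Definition KCc (V : code) (x y : seq bool) : nat := min_length (fun p => coutputs V p y x).

(* y is alpha-dependent with x:  C(y) - C(y|x) >= alpha  or  x = y
   (the integer inequality C(y) - C(y|x) >= alpha is written C(y|x) + alpha <= C(y)) *)
Definition dependent (U V : code) (alpha : nat) (y x : seq bool) : Prop :=
  KCc V y x + alpha <= KC U y \/ x = y.

(* If C(y) < L, with L := alpha + c, put y itself into B: there are at most 2^L such y,
   one per program shorter than L.  Otherwise split a shortest program of y as q ++ s with
   |q| = L and put the n-bit string 0...01q into B; there are at most 2^L of these.  A fixed
   machine that reads q off the condition 0...01q and runs U on q ++ s shows
   C(y | 0...01q) <= |s| + c = C(y) - alpha, where c is the simulation overhead of the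
   universal conditional machine.  Hence |B| <= 2^(c+1) 2^alpha, which is below the claimed
   bound once n >= 2^(c+1). *)

From Stdlib Require Import Cantor ClassicalEpsilon Classical Wf_nat.
From mathcomp Require Import all_boot zify.
Set Implicit Arguments. Unset Strict Implicit. Unset Printing Implicit Defensive.

Lemma nfst_pair a b : nfst (npair a b) = a.
Proof. by rewrite /nfst /npair Cantor.cancel_of_to. Qed.

Lemma nsnd_pair a b : nsnd (npair a b) = b.
Proof. by rewrite /nsnd /npair Cantor.cancel_of_to. Qed.

Lemma npair_eta x : npair (nfst x) (nsnd x) = x.
Proof. by rewrite /nfst /nsnd /npair -surjective_pairing Cantor.cancel_to_of. Qed.

(* Keeps [/=] from unfolding the Cantor pairing into its arithmetic. *)
Arguments npair : simpl never.
Arguments nfst : simpl never.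
Arguments nsnd : simpl never.

Section EvalLoops.

Variable ev : code -> nat -> option nat.

Fixpoint rec_loop f g a n : option nat :=
  match n with
  | 0 => ev f a
  | m.+1 => if rec_loop f g a m is Some v then ev g (npair a (npair m v)) else None
  end.

Fixpoint mu_loop f x j i : option nat :=
  match j with
  | 0 => None
  | j'.+1 => match ev f (npair x i) with
             | Some 0 => Some i
             | Some _ => mu_loop f x j' i.+1
             | None => None
             end
  end.

End EvalLoops.

Lemma eval_rec k f g x : eval k.+1 (CRec f g) x = rec_loop (eval k) f g (nfst x) (nsnd x).
Proof. by rewrite /=; elim: (nsnd x) => //= n ->. Qed.

Lemma eval_mu k f x : eval k.+1 (CMu f) x = mu_loop (eval k) f x k 0.
Proof. by rewrite /=; move: (eval k) 0 => e; elim: k => //= j IH i; rewrite IH. Qed.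

Lemma eval_pair k f g x : eval k.+1 (CPair f g) x =
  if (eval k f x, eval k g x) is (Some a, Some b) then Some (npair a b) else None.
Proof. by []. Qed.

Lemma eval_comp k f g x :
  eval k.+1 (CComp f g) x = if eval k g x is Some a then eval k f a else None.
Proof. by []. Qed.

Definition extends (e1 e2 : code -> nat -> option nat) :=
  forall c x v, e1 c x = Some v -> e2 c x = Some v.

Lemma rec_loop_extends e1 e2 f g a n v :
  extends e1 e2 -> rec_loop e1 f g a n = Some v -> rec_loop e2 f g a n = Some v.
Proof.
move=> e12; elim: n v => [|n IH] v /=; first exact: e12.
by case E: rec_loop => [w|] // /e12; rewrite (IH _ E).
Qed.

Lemma mu_loop_extends e1 e2 f x j j' i v : extends e1 e2 -> j <= j' ->
  mu_loop e1 f x j i = Some v -> mu_loop e2 f x j' i = Some v.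
Proof.
move=> e12; elim: j j' i => [|j IH] [|j'] i //= le_jj'.
by case E: (e1 f _) => [[|w]|] //; rewrite (e12 _ _ _ E) //; apply: IH.
Qed.

Lemma eval_extendsS k : extends (eval k) (eval k.+1).
Proof.
elim: k => [|k IH] // [||||f g|f g|f g|f] x v //.
- rewrite !eval_pair.
  by case E1: (eval k f x) => [a|] //; case E2: (eval k g x) => [b|] //;
     rewrite (IH _ _ _ E1) (IH _ _ _ E2).
- rewrite !eval_comp.
  by case E: (eval k g x) => [a|] // /IH; rewrite (IH _ _ _ E).
- by rewrite !eval_rec; apply: rec_loop_extends.
- by rewrite !eval_mu; apply: mu_loop_extends.
Qed.

Lemma eval_mono k k' : k <= k' -> extends (eval k) (eval k').
Proof.
move=> /subnK <- c x v; elim: (k' - k) => [|d IH] // /IH.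
by rewrite addSn; apply: eval_extendsS.
Qed.

Lemma halts_with_det c x v w : halts_with c x v -> halts_with c x w -> v = w.
Proof.
move=> [k1 H1] [k2 H2].
have := eval_mono (leq_maxl k1 k2) H1; rewrite (eval_mono (leq_maxr k1 k2) H2).
by case.
Qed.

Lemma halts_comp f g x a v :
  halts_with g x a -> halts_with f a v -> halts_with (CComp f g) x v.
Proof.
move=> [k1 H1] [k2 H2]; exists (maxn k1 k2).+1 => /=.
by rewrite (eval_mono (leq_maxl k1 k2) H1) (eval_mono (leq_maxr k1 k2) H2).
Qed.

Lemma halts_pair f g x a b :
  halts_with f x a -> halts_with g x b -> halts_with (CPair f g) x (npair a b).
Proof.
move=> [k1 H1] [k2 H2]; exists (maxn k1 k2).+1 => /=.
by rewrite (eval_mono (leq_maxl k1 k2) H1) (eval_mono (leq_maxr k1 k2) H2).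
Qed.

Definition computes (c : code) (F : nat -> nat) := forall x, halts_with c x (F x).

Lemma computes_ext c F G : computes c F -> F =1 G -> computes c G.
Proof. by move=> cF FG x; rewrite -FG. Qed.

Lemma computes_zero : computes CZero (fun=> 0). Proof. by exists 1. Qed.
Lemma computes_succ : computes CSucc succn. Proof. by exists 1. Qed.
Lemma computes_fst : computes CFst nfst. Proof. by exists 1. Qed.
Lemma computes_snd : computes CSnd nsnd. Proof. by exists 1. Qed.

Lemma computes_comp f g F G : computes f F -> computes g G -> computes (CComp f g) (F \o G).
Proof. by move=> fF gG x; apply: halts_comp (gG x) (fF _). Qed.

Lemma computes_pair f g F G :
  computes f F -> computes g G -> computes (CPair f g) (fun x => npair (F x) (G x)).
Proof. by move=> fF gG x; apply: halts_pair. Qed.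

Fixpoint prim_rec (F G : nat -> nat) a n :=
  if n is m.+1 then G (npair a (npair m (prim_rec F G a m))) else F a.

Lemma computes_rec f g F G : computes f F -> computes g G ->
  computes (CRec f g) (fun x => prim_rec F G (nfst x) (nsnd x)).
Proof.
move=> fF gG x.
suff [k Hk] : exists k,
    rec_loop (eval k) f g (nfst x) (nsnd x) = Some (prim_rec F G (nfst x) (nsnd x)).
  by exists k.+1; rewrite eval_rec.
elim: (nsnd x) => [|n [k IH]] /=; first exact: fF.
have [k' Hk'] := gG (npair (nfst x) (npair n (prim_rec F G (nfst x) n))).
exists (maxn k k').
rewrite (rec_loop_extends (eval_mono (leq_maxl k k')) IH).
exact: eval_mono (leq_maxr k k') _ _ _ Hk'.
Qed.

Lemma computes_uniform_fuel f F (xs : seq nat) :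
  computes f F -> exists K, forall x, x \in xs -> eval K f x = Some (F x).
Proof.
move=> fF; elim: xs => [|x xs [K HK]]; first by exists 0.
have [k Hk] := fF x; exists (maxn K k) => y; rewrite inE => /predU1P[->|/HK].
- exact: eval_mono (leq_maxr K k) _ _ _ Hk.
- exact: eval_mono (leq_maxl K k) _ _ _.
Qed.

Lemma mu_loop_first e f F x i0 j i :
  (forall i, i <= i0 -> e f (npair x i) = Some (F (npair x i))) ->
  F (npair x i0) = 0 -> (forall i, i < i0 -> F (npair x i) != 0) ->
  i <= i0 -> i0 - i < j -> mu_loop e f x j i = Some i0.
Proof.
move=> ev F0 Fneq; elim: j i => [|j IH] i //= le_ii0 fuel.
rewrite ev //; case: (ltngtP i i0) le_ii0 => [lt_ii0|//|-> _]; last by rewrite F0.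
by case: (F _) (Fneq i lt_ii0) => // w _ _; apply: IH; lia.
Qed.

Lemma halts_mu f F x i0 : computes f F -> F (npair x i0) = 0 ->
  (forall i, i < i0 -> F (npair x i) != 0) -> halts_with (CMu f) x i0.
Proof.
move=> fF F0 Fneq.
have [K HK] := computes_uniform_fuel [seq npair x i | i <- iota 0 i0.+1] fF.
exists (maxn K i0.+1).+1; rewrite eval_mu.
apply: (mu_loop_first (F := F)) => // [i le_ii0|].
- by apply: eval_mono (leq_maxl _ _) _ _ _ (HK _ _); rewrite map_f // mem_iota.
- by rewrite subn0 leq_maxr.
Qed.

Definition CApp2 (h f g : code) := CComp h (CPair f g).

Lemma computes_app2 h f g (H : nat -> nat -> nat) F G :
  computes h (fun z => H (nfst z) (nsnd z)) -> computes f F -> computes g G ->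
  computes (CApp2 h f g) (fun x => H (F x) (G x)).
Proof.
move=> hH fF gG; apply: computes_ext (computes_comp hH (computes_pair fF gG)) _ => x /=.
by rewrite nfst_pair nsnd_pair.
Qed.

Definition Cid := CPair CFst CSnd.
Definition Csnd2 := CComp CSnd CSnd.
Definition Cadd := CRec Cid (CComp CSucc Csnd2).
Definition Cpred := CApp2 (CRec CZero (CComp CFst CSnd)) CZero Cid.
Definition Csub := CRec Cid (CComp Cpred Csnd2).
Definition Cmul := CRec CZero (CApp2 Cadd Csnd2 CFst).
Definition Cpow2 := CApp2 (CRec (CComp CSucc CZero) (CApp2 Cadd Csnd2 Csnd2)) CZero Cid.
Definition Clog2 := CMu (CApp2 Csub (CComp CSucc CFst) (CComp Cpow2 (CComp CSucc CSnd))).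

Lemma computes_id : computes Cid id.
Proof. exact: computes_ext (computes_pair computes_fst computes_snd) npair_eta. Qed.

Lemma computes_snd2 : computes Csnd2 (fun z => nsnd (nsnd z)).
Proof. exact: computes_comp computes_snd computes_snd. Qed.

Lemma computes_add : computes Cadd (fun z => nfst z + nsnd z).
Proof.
apply: computes_ext (computes_rec computes_id (computes_comp computes_succ computes_snd2)) _.
by move=> z; elim: (nsnd z) => [|n /= ->]; rewrite ?addn0 ?nsnd_pair ?addnS.
Qed.

Lemma computes_pred : computes Cpred predn.
Proof.
apply: computes_ext (computes_app2 (computes_rec computes_zero
  (computes_comp computes_fst computes_snd)) computes_zero computes_id) _.
by case=> //= n; rewrite nsnd_pair nfst_pair.
Qed.

Lemma computes_sub : computes Csub (fun z => nfst z - nsnd z).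
Proof.
apply: computes_ext (computes_rec computes_id (computes_comp computes_pred computes_snd2)) _.
by move=> z; elim: (nsnd z) => [|n /= ->]; rewrite ?subn0 ?nsnd_pair ?subnS.
Qed.

Lemma computes_mul : computes Cmul (fun z => nfst z * nsnd z).
Proof.
apply: computes_ext (computes_rec computes_zero
  (computes_app2 computes_add computes_snd2 computes_fst)) _.
by move=> z; elim: (nsnd z) => [|n /= ->]; rewrite ?muln0 // !nsnd_pair nfst_pair mulnS addnC.
Qed.

Lemma computes_pow2 : computes Cpow2 (expn 2).
Proof.
apply: computes_ext (computes_app2 (computes_rec (computes_comp computes_succ computes_zero)
  (computes_app2 computes_add computes_snd2 computes_snd2)) computes_zero computes_id) _.
by elim=> [|n /= ->]; rewrite // !nsnd_pair expnS mul2n addnn.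
Qed.

Lemma computes_log2 : computes Clog2 (trunc_log 2).
Proof.
have cF := computes_app2 computes_sub (computes_comp computes_succ computes_fst)
  (computes_comp computes_pow2 (computes_comp computes_succ computes_snd)).
move=> x; apply: halts_mu cF _ _ => [|i lt_i_log] /=; rewrite nfst_pair nsnd_pair.
- by apply/eqP; rewrite subn_eq0; apply: trunc_log_ltn.
- have x_gt0 : 0 < x by case: x lt_i_log; rewrite ?trunc_log0.
  rewrite subn_eq0 -ltnNge ltnS; apply: leq_trans (trunc_logP (isT : 1 < 2) x_gt0).
  by rewrite leq_exp2l.
Qed.

Definition bit_step (acc : nat) (b : bool) := acc.*2 + b.
Definition binval (s : seq bool) := foldl bit_step 0 s.

Lemma nat_of_bitsE s : nat_of_bits s = (foldl bit_step 1 s).-1.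
Proof. by []. Qed.

Lemma foldl_bit_step a s : foldl bit_step a s = a * 2 ^ size s + binval s.
Proof.
elim: s a => [|b s IH] a /=; first by rewrite muln1 addn0.
rewrite /binval /= !IH /bit_step expnS; case: b => /=; lia.
Qed.

Lemma binval_lt s : binval s < 2 ^ size s.
Proof.
elim: s => [|b s IH] //=.
rewrite /binval /= foldl_bit_step /bit_step expnS; case: b => /=; lia.
Qed.

Lemma nat_of_bitsS s : (nat_of_bits s).+1 = 2 ^ size s + binval s.
Proof. by rewrite nat_of_bitsE foldl_bit_step mul1n prednK // addn_gt0 expn_gt0. Qed.

Lemma nat_of_bits_lt s : nat_of_bits s < 2 ^ (size s).+1.
Proof. by have := binval_lt s; rewrite -ltnS nat_of_bitsS expnS; lia. Qed.

Lemma size_of_bits s : trunc_log 2 (nat_of_bits s).+1 = size s.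
Proof.
apply: trunc_log_eq => //; rewrite nat_of_bitsS expnS leq_addr /=.
by have := binval_lt s; lia.
Qed.

Lemma nat_of_bits_cat q s :
  nat_of_bits (q ++ s) = nat_of_bits q * 2 ^ size s + nat_of_bits s.
Proof.
have fq : foldl bit_step 1 q = (nat_of_bits q).+1 by rewrite nat_of_bitsS foldl_bit_step mul1n.
rewrite [LHS]nat_of_bitsE foldl_cat foldl_bit_step fq.
have := nat_of_bitsS s; nia.
Qed.

Lemma binval_cons b s : binval (b :: s) = b * 2 ^ size s + binval s.
Proof. by rewrite /binval /= foldl_bit_step. Qed.

Lemma binval_inj s1 s2 : size s1 = size s2 -> binval s1 = binval s2 -> s1 = s2.
Proof.
elim: s1 s2 => [|b1 s1 IH] [|b2 s2] //= [eq_size]; rewrite !binval_cons -eq_size.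
have := binval_lt s1; have := binval_lt s2; rewrite -eq_size.
case: b1; case: b2 => /= lt2 lt1 E; try lia.
all: by rewrite (IH s2) //; lia.
Qed.

Lemma nat_of_bits_inj : injective nat_of_bits.
Proof.
move=> s1 s2 E; have eq_size : size s1 = size s2 by rewrite -!size_of_bits E.
by apply: binval_inj => //; have := nat_of_bitsS s1; rewrite E nat_of_bitsS eq_size; lia.
Qed.

Definition pad (r : nat) (q : seq bool) := nseq r false ++ true :: q.

Lemma size_pad r q : size (pad r q) = r + (size q).+1.
Proof. by rewrite size_cat size_nseq. Qed.

Lemma nat_of_bits_pad r q :
  (nat_of_bits (pad r q)).+1 = 2 ^ size (pad r q) + (nat_of_bits q).+1.
Proof.
rewrite nat_of_bitsS /binval foldl_cat.
have -> : foldl bit_step 0 (nseq r false) = 0 by elim: r.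
by rewrite [_ (true :: q)]/= nat_of_bitsE prednK // foldl_bit_step addn_gt0 mul1n expn_gt0.
Qed.

Definition Csize := CComp Clog2 CSucc.
Definition Cdecode :=
  CApp2 Cadd (CApp2 Cmul
    (CComp Cpred (CApp2 Csub (CComp CSucc CSnd) (CComp Cpow2 (CComp Csize CSnd))))
    (CComp Cpow2 (CComp Csize CFst))) CFst.

Definition decode (z : nat) :=
  ((nsnd z).+1 - 2 ^ trunc_log 2 (nsnd z).+1).-1 * 2 ^ trunc_log 2 (nfst z).+1 + nfst z.

Lemma computes_decode : computes Cdecode decode.
Proof.
have cSize : computes Csize (fun z => trunc_log 2 z.+1).
  exact: computes_comp computes_log2 computes_succ.
exact: computes_app2 computes_add (computes_app2 computes_mul
  (computes_comp computes_pred (computes_app2 computes_sub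
     (computes_comp computes_succ computes_snd)
     (computes_comp computes_pow2 (computes_comp cSize computes_snd))))
  (computes_comp computes_pow2 (computes_comp cSize computes_fst))) computes_fst.
Qed.

Lemma decode_pad r q s :
  decode (npair (nat_of_bits s) (nat_of_bits (pad r q))) = nat_of_bits (q ++ s).
Proof.
by rewrite /decode nfst_pair nsnd_pair !size_of_bits nat_of_bits_pad addKn nat_of_bits_cat.
Qed.

Lemma min_lengthP (P : seq bool -> Prop) p : P p ->
  (exists p0, size p0 = min_length P /\ P p0) /\ forall p', P p' -> min_length P <= size p'.
Proof.
move=> Pp; pose Q n := exists p, size p = n /\ P p.
have [m [[Qm min_m] _]] : has_unique_least_element le Q.
  apply: dec_inh_nat_subset_has_unique_least_element => [n|]; first exact: classic.
  by exists (size p), p.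
apply: (epsilon_spec _ (fun n => Q n /\ forall p, P p -> n <= size p)).
by exists m; split=> // p' Pp'; apply/leP/min_m; exists p'.
Qed.

Lemma min_length_le (P : seq bool -> Prop) p : P p -> min_length P <= size p.
Proof. by move=> Pp; apply: (min_lengthP Pp).2. Qed.

Lemma outputs_total U : universal_plain U -> forall x, exists p, outputs U p x.
Proof.
move=> hU x; have [k Hk] := hU Cid.
by have [p Up _] := Hk x x (computes_id _); exists p.
Qed.

Definition shortest_program (U : code) (x : seq bool) :=
  epsilon (inhabits [::]) (fun p => outputs U p x /\ size p = KC U x).

Lemma shortest_programP U x : universal_plain U ->
  outputs U (shortest_program U x) x /\ size (shortest_program U x) = KC U x.
Proof.
move=> hU; apply: (epsilon_spec _ (fun p => outputs U p x /\ size p = KC U x)).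
have [p Up] := outputs_total hU x.
by have [[p0 [size_p0 Up0]] _] := min_lengthP (P := outputs U ^~ x) Up; exists p0.
Qed.

Lemma card_le_by_codes (T : finType) (S : {set T}) (enc : T -> seq bool) L :
  {in S &, injective enc} -> {in S, forall y, size (enc y) < L} -> #|S| <= 2 ^ L.
Proof.
move=> enc_inj enc_short.
rewrite cardE -(size_map (nat_of_bits \o enc)) -[2 ^ L](size_iota 0).
apply: uniq_leq_size => [|? /mapP[y Sy ->]].
- rewrite map_inj_in_uniq ?enum_uniq // => y1 y2.
  by rewrite !mem_enum => S1 S2 /nat_of_bits_inj; apply: enc_inj.
- rewrite mem_iota /= add0n; move: Sy; rewrite mem_enum => /enc_short short_y.
  by apply: leq_trans (nat_of_bits_lt _) _; rewrite leq_exp2l.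
Qed.

Lemma card_low_complexity U n L : universal_plain U ->
  #|[set y : n.-tuple bool | KC U y < L]| <= 2 ^ L.
Proof.
move=> hU; apply: (@card_le_by_codes _ _ (shortest_program U \o val)) => [y1 y2 _ _ /= E|y].
- have [Uy1 _] := shortest_programP y1 hU; have [Uy2 _] := shortest_programP y2 hU.
  rewrite /outputs E in Uy1.
  by apply/val_inj/nat_of_bits_inj; apply: halts_with_det Uy1 Uy2.
- by rewrite inE (shortest_programP _ hU).2.
Qed.

Lemma KCc_pad_le U V : universal_cond V -> exists c, forall r q s x,
  outputs U (q ++ s) x -> KCc V x (pad r q) <= size s + c.
Proof.
move=> hV; have [c Hc] := hV (CComp U Cdecode); exists c => r q s x Uqs.
have decU : coutputs (CComp U Cdecode) s (pad r q) x.
  by apply: halts_comp (computes_decode _) _; rewrite decode_pad.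
have [p Vp size_p] := Hc _ _ _ decU.
exact: leq_trans (min_length_le (P := fun p => coutputs V p (pad r q) x) Vp) size_p.
Qed.

Section Cover.

Variables (U V : code) (c : nat).
Hypothesis hU : universal_plain U.
Hypothesis KCc_pad : forall r q s x, outputs U (q ++ s) x -> KCc V x (pad r q) <= size s + c.

Lemma dependent_pad_prefix alpha r y : alpha + c <= KC U y ->
  dependent U V alpha y (pad r (take (alpha + c) (shortest_program U y))).
Proof.
move=> high_y; left; set p := shortest_program U y.
have [Up size_p] : outputs U p y /\ size p = KC U y by apply: shortest_programP.
have Uqs : outputs U (take (alpha + c) p ++ drop (alpha + c) p) y by rewrite cat_take_drop.
by have := KCc_pad r Uqs; rewrite size_drop size_p; lia.
Qed.

Lemma dependency_cover n alpha : exists B : {set n.-tuple bool},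
  #|B| <= 2 ^ (alpha + c).+1 /\
  forall y : n.-tuple bool, exists2 x, x \in B & dependent U V alpha y x.
Proof.
set L := alpha + c; case: (leqP n L) => [short_n|long_n].
  exists setT; split; last by move=> y; exists y => //; right.
  by rewrite cardsT card_tuple card_bool leq_exp2l //; lia.
have size_pad_n (q : L.-tuple bool) : size (pad (n - L.+1) q) == n.
  by rewrite size_pad size_tuple; apply/eqP; lia.
pose padt q : n.-tuple bool := Tuple (size_pad_n q).
exists ([set y : n.-tuple bool | KC U y < L] :|: padt @: setT); split.
  apply: leq_trans (leq_card_setU _ _) _; rewrite expnS mul2n -addnn.
  rewrite leq_add ?card_low_complexity //.
  by apply: leq_trans (leq_imset_card _ _) _; rewrite cardsT card_tuple card_bool.
move=> y; case: (ltnP (KC U y) L) => [low_y|high_y].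
  by exists y; [rewrite !inE low_y | right].
have size_q : size (take L (shortest_program U y)) == L.
  by rewrite size_takel // (shortest_programP y hU).2.
exists (padt (Tuple size_q)); first by rewrite inE imset_f ?orbT.
exact: dependent_pad_prefix.
Qed.

End Cover.

Unset Implicit Arguments.

Theorem theorem6 (U V : code) (hU : universal_plain U) (hV : universal_cond V) :
  exists N : nat, forall n : nat, N <= n -> forall alpha : nat,
    exists B : {set n.-tuple bool},
      #|B| <= (2 * n ^ 13 + n ^ 12) * 2 ^ alpha /\
      forall y : n.-tuple bool, exists2 x, x \in B & dependent U V alpha (val y) (val x).
Proof.
have [c KCc_pad] := KCc_pad_le U hV.
exists (2 ^ c.+1) => n large_n alpha.
have [B [card_B dep_B]] := dependency_cover hU KCc_pad n alpha.
exists B; split => //; apply: leq_trans card_B _.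
rewrite -addnS expnD mulnC leq_mul2r; apply/orP; right.
have n_gt0 : 0 < n by apply: leq_trans large_n; rewrite expn_gt0.
have : n <= n ^ 13 by rewrite -{1}(expn1 n) leq_pexp2l.
lia.
Qed.
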